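(* Let $0<T\le1$, let $L$ be an invariant intrinsic location functional and $\mathbf X$ a periodic stationary process with period $1$. Then the càdlàg density $f^{\mathbf X}_{L,T}$ of $L(\mathbf X,[0,T])$ on $(0,T)$ satisfies $f^{\mathbf X}_{L,T}(t)\ge 1$ for all $t\in(0,T)$.
   Context: Let $H$ be a set of functions $\mathbb R\to\mathbb R$ with period $1$, invariant under shifts ($\theta_cg(x)=g(x+c)$), with the cylindrical $\sigma$-field; $\mathcal I$ is the set of compact intervals $[a,b]$, $a<b$. An intrinsic location functional is a map $L:H\times\mathcal I\to\mathbb R\cup\{\infty\}$ such that: (i) $L(\cdot,I)$ is measurable; (ii) $L(g,I)\in I\cup\{\infty\}$; (iii) $L(g,I)=L(\theta_cg,I-c)+c$ (with $\infty+c=\infty$); (iv) if $I_2\subseteq I_1$ and $L(g,I_1)\in I_2$ then $L(g,I_2)=L(g,I_1)$; (v) if $I_2\subseteq I_1$ and $L(g,I_2)\ne\infty$ then $L(g,I_1)\neq\infty$. It is called invariant if moreover $L(g,I)\ne\infty$ for all $g,I$, and $L(g,[0,1])=L(g,[a,a+1])\pmod 1$ for all $a\in\mathbb R$, $g\in H$. A periodic stationary process with period $1$ is a stationary process with continuous sample paths of period $1$ lying in $H$. The law of $L(\mathbf X,[0,T])$ restricted to $(0,T)$ is absolutely continuous with a càdlàg density $f^{\mathbf X}_{L,T}$. *)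

From HB Require Import structures.
From mathcomp Require Import all_boot all_order all_algebra.
From mathcomp Require Import all_classical all_reals all_analysis.
Set Implicit Arguments. Unset Strict Implicit. Unset Printing Implicit Defensive.
Import Order.TTheory GRing.Theory Num.Theory.
Import numFieldNormedType.Exports.
Local Open Scope classical_set_scope.
Local Open Scope ring_scope.

Section Defs.
Variable R : realType.

Definition shift (c : R) (g : R -> R) : R -> R := fun x => g (x + c).

Definition period1_shift_invariant (H : set (R -> R)) : Prop :=
  (forall g, H g -> forall x, g (x + 1) = g x) /\
  (forall g c, H g -> H (shift c g)).

Definition cylinder_sets (H : set (R -> R)) : set (set (R -> R)) :=
  [set A | exists (t : R) (B : set R), measurable B /\
                                       A = H `&` [set g | B (g t)]].

(* The value None stands for infinity.  A compact interval [a,b] (a < b)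
   is represented by its endpoints. *)
Definition intrinsic_location_functional (H : set (R -> R))
  (L : (R -> R) -> R -> R -> option R) : Prop :=
  (forall a b, a < b -> forall B : set R, measurable B ->
     <<s H, cylinder_sets H >>
       [set g | H g /\ exists x, L g a b = Some x /\ B x]) /\
  (forall g a b, H g -> a < b ->
     forall x, L g a b = Some x -> a <= x <= b) /\
  (forall g a b c, H g -> a < b ->
     L g a b = omap (fun x => x + c) (L (shift c g) (a - c) (b - c))) /\
  (forall g a1 b1 a2 b2, H g -> a1 < b1 -> a2 < b2 ->
     a1 <= a2 -> b2 <= b1 ->
     forall x, L g a1 b1 = Some x -> a2 <= x <= b2 ->
       L g a2 b2 = Some x) /\
  (forall g a1 b1 a2 b2, H g -> a1 < b1 -> a2 < b2 ->
     a1 <= a2 -> b2 <= b1 ->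
     L g a2 b2 <> None -> L g a1 b1 <> None).

Definition invariant_intrinsic_location_functional (H : set (R -> R))
  (L : (R -> R) -> R -> R -> option R) : Prop :=
  intrinsic_location_functional H L /\
  (forall g a b, H g -> a < b -> L g a b <> None) /\
  (forall g a, H g -> exists (x y : R) (k : int),
      L g 0 1 = Some x /\ L g a (a + 1) = Some y /\ x - y = k%:~R).

(* Stationarity: all finite-dimensional
   distributions are shift invariant (stated on measurable rectangles,
   which generate the product sigma-field). *)
Definition periodic_stationary_process (H : set (R -> R))
  (d : measure_display) (Omega : measurableType d)
  (P : probability Omega R) (X : Omega -> R -> R) : Prop :=
  (forall t, measurable_fun setT (fun w => X w t)) /\
  (forall w, H (X w)) /\
  (forall w, continuous (X w)) /\
  (forall (n : nat) (ts : 'I_n -> R) (Bs : 'I_n -> set R) (c : R),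
     (forall i, measurable (Bs i)) ->
     P [set w | forall i, Bs i (X w (ts i + c))] =
     P [set w | forall i, Bs i (X w (ts i))]).

Definition is_density_on (d : measure_display) (Omega : measurableType d)
  (P : probability Omega R) (Y : Omega -> option R) (T : R) (f : R -> R)
  : Prop :=
  forall B : set R, measurable B -> B `<=` `]0, T[ ->
    P [set w | exists x, Y w = Some x /\ B x] =
    (\int[lebesgue_measure]_(x in B) (f x)%:E)%E.

Definition cadlag_on (a b : R) (f : R -> R) : Prop :=
  forall t, a < t < b ->
    f x @[x --> t^'+] --> f t /\ cvg (f x @[x --> t^'-]).

End Defs.

(* Write Y = L(X, [0,1]).  Invariance of L gives L(theta_c X, [0,1]) = Y - c
   (mod 1), and stationarity (extended from finite-dimensional rectangles to
   the cylindrical sigma-field by a pi-lambda argument) says theta_c X and X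
   have the same law on that sigma-field.  Hence the law of the fractional
   part of Y - t is invariant under rotations, so it gives mass 1/n to
   [0, 1/n), i.e. P(t <= Y < t + 1/n) = 1/n.  On that event L(X, [0,T]) = Y by
   the restriction property (iv), so the integral of f over [t, t + 1/n) is
   at least 1/n for every large n; if f(t) < 1, right-continuity of f at t
   contradicts this. *)

From Pilot Require Import Defs.
From HB Require Import structures.
From mathcomp Require Import all_boot all_order all_algebra.
From mathcomp Require Import all_classical all_reals all_analysis.
From mathcomp Require Import lra measurable_realfun.
Import Order.TTheory GRing.Theory Num.Theory.
Import numFieldNormedType.Exports.
Local Open Scope classical_set_scope.
Local Open Scope ring_scope.

Section cylinder_law.
Variables (R : realType) (H : set (R -> R)) (d : measure_display)
  (Omega : measurableType d) (P : probability Omega R) (X : Omega -> R -> R).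
Hypothesis HX : periodic_stationary_process H P X.
Hypothesis Hsh : period1_shift_invariant H.

(* A finite cylinder is encoded by the list of its constraints [(t_i, B_i)]. *)
Fixpoint in_cyl (s : seq (R * set R)) (g : R -> R) : Prop :=
  if s is p :: s' then p.2 (g p.1) /\ in_cyl s' g else True.

Fixpoint cyl_measurable (s : seq (R * set R)) : Prop :=
  if s is p :: s' then measurable p.2 /\ cyl_measurable s' else True.

Definition shift_cyl (c : R) (s : seq (R * set R)) := map (fun p => (p.1 + c, p.2)) s.

Lemma in_cyl_cat s1 s2 g : in_cyl (s1 ++ s2) g <-> in_cyl s1 g /\ in_cyl s2 g.
Proof. by elim: s1 => [|p s1 IH] /=; [tauto | rewrite IH; tauto]. Qed.

Lemma cyl_measurable_cat s1 s2 :
  cyl_measurable s1 -> cyl_measurable s2 -> cyl_measurable (s1 ++ s2).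
Proof. by elim: s1 => [|p s1 IH] //= [? ?] ?; split => //; apply: IH. Qed.

Lemma in_cyl_shift c s g : in_cyl s (Defs.shift c g) <-> in_cyl (shift_cyl c s) g.
Proof. by elim: s => [|p s IH] //=; rewrite IH. Qed.

Lemma cyl_measurable_shift c s : cyl_measurable s -> cyl_measurable (shift_cyl c s).
Proof. by elim: s => [|p s IH] //= [? ?]; split => //; apply: IH. Qed.

Let d0 : R * set R := (0, setT).

Lemma in_cyl_nth s g :
  in_cyl s g <-> forall i : 'I_(size s), (nth d0 s i).2 (g (nth d0 s i).1).
Proof.
elim: s => [|p s IH] /=; first by split => // _ [].
rewrite IH; split => [[gp gs] [[|i] /= Hi] //|h]; first exact: (gs (@Ordinal _ i Hi)).
by split; [exact: (h ord0) | move=> i; exact: (h (lift ord0 i))].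
Qed.

Lemma cyl_measurable_nth s i : cyl_measurable s -> measurable (nth d0 s i).2.
Proof.
elim: s i => [|p s IH] [|i] /=; try by move=> *; exact: measurableT.
- by case.
- by case=> _; apply: IH.
Qed.

Lemma measurable_in_cyl s : cyl_measurable s -> measurable [set w | in_cyl s (X w)].
Proof.
case: HX => mX _; elim: s => [|p s IH] /=; first by move=> _; exact: measurableT.
move=> [mp ms]; apply: measurableI; last exact: IH.
by rewrite -[X in measurable X]setTI; exact: mX.
Qed.

Lemma P_in_cyl_shift c s : cyl_measurable s ->
  P [set w | in_cyl s (Defs.shift c (X w))] = P [set w | in_cyl s (X w)].
Proof.
move=> ms; case: HX => _ [_ [_ stat]].
have E g : in_cyl s g = forall i : 'I_(size s), (nth d0 s i).2 (g (nth d0 s i).1).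
  exact/propext/in_cyl_nth.
rewrite /Defs.shift; under eq_set => w do rewrite E.
under [in RHS]eq_set => w do rewrite E.
exact: (stat _ (fun i => (nth d0 s i).1) (fun i => (nth d0 s i).2) c
  (fun i => cyl_measurable_nth _ i ms)).
Qed.

Definition cyl_sets := [set A | exists s, cyl_measurable s /\ A = H `&` in_cyl s].

Definition shift_preserved (c : R) := [set A : set (R -> R) | A `<=` H /\
  measurable [set w | A (X w)] /\ measurable [set w | A (Defs.shift c (X w))] /\
  P [set w | A (X w)] = P [set w | A (Defs.shift c (X w))]].

Let H_X w : H (X w). Proof. by case: HX => _ []. Qed.

Let H_shiftX c w : H (Defs.shift c (X w)).
Proof. by case: Hsh => _; apply. Qed.

Lemma lambda_system_shift_preserved c : lambda_system H (shift_preserved c).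
Proof.
have P_fin A : measurable A -> (P A < +oo)%E.
  by move=> mA; rewrite (le_lt_trans (probability_le1 _ mA)) ?ltry.
split.
- by move=> A [].
- have HT (g : Omega -> R -> R) : (forall w, H (g w)) -> [set w | H (g w)] = setT.
    by move=> Hg; apply/seteqP; split => w // _; exact: Hg.
  rewrite /shift_preserved /= (HT X) // (HT (fun w => Defs.shift c (X w))) //.
  by do !split => //; exact: measurableT.
- move=> A B BA [AH [mA [mcA eA]]] [_ [mB [mcB eB]]].
  split; first by move=> g [/AH].
  do 2 (split; first exact: measurableD).
  rewrite !measureD ?P_fin // !setIidr; first by congr (_ - _)%E.
  + by move=> w /BA.
  + by move=> w /BA.
- move=> F ndF FP; split; first by move=> g [i _ /(proj1 (FP i))].
  have mF i := proj1 (proj2 (FP i)).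
  have mcF i := proj1 (proj2 (proj2 (FP i))).
  have m1 := bigcupT_measurable _ mF; have m2 := bigcupT_measurable _ mcF.
  do 2 (split; first by []).
  have nd (Y : Omega -> R -> R) : nondecreasing_seq (fun i => [set w | F i (Y w)]).
    by move=> m n mn; apply/subsetPset => w; move/subsetPset: (ndF m n mn); apply.
  have c1 := nondecreasing_cvg_mu (mu := P) mF m1 (nd X).
  have c2 := nondecreasing_cvg_mu (mu := P) mcF m2 (nd (fun w => Defs.shift c (X w))).
  have e : (fun i => P [set w | F i (X w)]) =
           (fun i => P [set w | F i (Defs.shift c (X w))]).
    by apply/funext => i; exact: (proj2 (proj2 (proj2 (FP i)))).
  by rewrite /comp e in c1; exact: (cvg_unique _ c1 c2).
Qed.

Lemma cyl_sets_shift_preserved c : cyl_sets `<=` shift_preserved c.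
Proof.
move=> _ [s [ms ->]]; split; first by move=> g [].
have HI (g : Omega -> R -> R) : (forall w, H (g w)) ->
    [set w | (H `&` in_cyl s) (g w)] = [set w | in_cyl s (g w)].
  by move=> Hg; apply/seteqP; split => w /=; [case | split].
rewrite !HI //; split; first exact: measurable_in_cyl.
split; last by rewrite P_in_cyl_shift.
under eq_set => w do rewrite (propext (in_cyl_shift _ _ _)).
exact/measurable_in_cyl/cyl_measurable_shift.
Qed.

Lemma setI_closed_cyl_sets : setI_closed cyl_sets.
Proof.
move=> _ _ [s1 [m1 ->]] [s2 [m2 ->]]; exists (s1 ++ s2).
split; first exact: cyl_measurable_cat.
by apply/seteqP; split => g /=; rewrite in_cyl_cat; tauto.
Qed.

Lemma cyl_sets_sigma_sub A : <<s H, cyl_sets >> A -> A `<=` H.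
Proof.
apply: (@smallest_sub _ _ _ [set A | A `<=` H]); last by move=> _ [s [_ ->]] g [].
split => //; first by move=> B _; exact: subDsetl.
by move=> F hF; apply: bigcup_sub => i _; exact: hF.
Qed.

Lemma cylinder_sets_sub_cyl_sets : <<s H, cylinder_sets H >> `<=` <<s H, cyl_sets >>.
Proof.
apply: smallest_sub; first exact: smallest_sigma_algebra.
move=> _ [t [B [mB ->]]]; apply: sub_sigma_algebra; exists [:: (t, B)].
by split => //; apply/seteqP; split => g /=; tauto.
Qed.

Lemma cylinder_sigma_shift_preserved c A : <<s H, cylinder_sets H >> A ->
  measurable [set w | A (X w)] /\
  P [set w | A (X w)] = P [set w | A (Defs.shift c (X w))].
Proof.
move=> /cylinder_sets_sub_cyl_sets /(lambda_system_subset setI_closed_cyl_sets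
  (lambda_system_shift_preserved c) (@cyl_sets_shift_preserved c)
  cyl_sets_sigma_sub).
by case=> _ [? [_ ?]].
Qed.

End cylinder_law.

Section fractional_part.
Context {R : realType}.

Definition fract (u : R) : R := u - (Num.floor u)%:~R.

Lemma fract_itv u : 0 <= fract u < 1.
Proof. by have /andP[] := floor_itv u; rewrite /fract intrD => *; apply/andP; split; lra. Qed.

Lemma fractDz u (k : int) : fract (u + k%:~R) = fract u.
Proof. by rewrite /fract floorDrz ?intr_int // intrKfloor intrD; lra. Qed.

Lemma fract_id u : 0 <= u < 1 -> fract u = u.
Proof. by move=> u01; rewrite /fract (@floor_def _ u 0) ?subr0 // add0r. Qed.

Lemma fractDl u v : fract (fract u + v) = fract (u + v).
Proof.
have -> : fract u + v = u + v + (- Num.floor u)%:~R by rewrite /fract intrN; lra.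
exact: fractDz.
Qed.

Lemma fract_subr_lt (u c a : R) : 0 <= u < 1 -> 0 <= c -> c + a <= 1 -> 0 < a ->
  (fract (u - c) < a) = (c <= u < c + a).
Proof.
move=> /andP[u0 u1] c0 ca a0; have [cu|uc] := leP c u.
  by rewrite fract_id; [apply/idP/idP => /=; lra | apply/andP; split; lra].
have -> : u - c = u - c + 1 + (-1)%:~R by rewrite intrN; lra.
by rewrite fractDz fract_id; [apply/negbTE; lra | apply/andP; split; lra].
Qed.

Lemma measurable_fract : measurable_fun setT fract.
Proof.
apply: measurable_funB; first exact: measurable_id.
by apply: nondecreasing_measurable => // x y xy; rewrite ler_int le_floor.
Qed.

End fractional_part.

Section integral_bound.
Context d {T : measurableType d} {R : realType}.
Variable mu : {measure set T -> \bar R}.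
Local Open Scope ereal_scope.

(* No measurability of [f] is needed: the positive part of the integral is a
   supremum over simple functions below [f], each of which is below [M]. *)
Lemma integral_le_cst (D : set T) (f : T -> R) (M : R) :
  measurable D -> (0 <= M)%R -> (forall x, D x -> (f x <= M)%R) ->
  \int[mu]_(x in D) (f x)%:E <= M%:E * mu D.
Proof.
move=> mD M0 fM; rewrite -integral_cst // integralE.
have neg_ge0 : 0 <= \int[mu]_(x in D) ((fun x => (f x)%:E)^\- x).
  by apply: integral_ge0 => x _; exact: funeneg_ge0.
apply: le_trans (leeB (lexx _) neg_ge0) _; rewrite sube0.
rewrite ge0_integralE; last by move=> x _; exact: funepos_ge0.
rewrite ge0_integralE; last by move=> x _; rewrite lee_fin.
apply: ereal_sup_le => _ [h /= hf <-]; exists h => //= x.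
apply: le_trans (hf x) _; rewrite /patch; case: ifP => // /set_mem Dx.
by rewrite funeposE ge_max !lee_fin fM.
Qed.

End integral_bound.

Lemma integral_itv_le {R : realType} (f : R -> R) (t a M : R) :
  0 < a -> 0 <= M -> (forall x, t <= x < t + a -> f x <= M) ->
  (\int[lebesgue_measure]_(x in `[t, (t + a)%R[) (f x)%:E <= (M * a)%:E)%E.
Proof.
move=> a0 M0 fM.
apply: le_trans (@integral_le_cst _ _ _ lebesgue_measure _ f M (measurable_itv _) M0 _) _.
  by move=> x /=; rewrite in_itv; exact: fM.
rewrite [X in (_ * X <= _)%E]lebesgue_measure_itv /= lte_fin ltrDl a0.
by rewrite -EFinD -EFinM addrAC subrr add0r.
Qed.

Section equal_arcs.
Context {R : realType} d {Omega : measurableType d} (P : probability Omega R).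
Variables (U : Omega -> R) (n : nat).
Hypotheses (n_gt0 : (0 < n)%N) (mU : measurable_fun setT U)
  (U_itv : forall w, 0 <= U w < 1).

Let arc (k : nat) := [set w | k%:R / n%:R <= U w < k.+1%:R / n%:R].

Let n_gt0R : 0 < n%:R :> R. Proof. by rewrite ltr0n. Qed.

Let measurable_arc k : measurable (arc k).
Proof.
have := mU measurableT _ (measurable_itv `[k%:R / n%:R, k.+1%:R / n%:R[).
by rewrite setTI; congr measurable; apply/seteqP; split => w; rewrite /= in_itv.
Qed.

Let trivIset_arc : trivIset [set: 'I_n] (fun i : 'I_n => arc i).
Proof.
have le_arc (i j : nat) : (i < j)%N -> i.+1%:R / n%:R <= j%:R / n%:R :> R.
  by move=> ij; rewrite ler_pM2r ?invr_gt0 // ler_nat.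
apply/trivIsetP => i j _ _ ij; apply/seteqP; split => // w [] /=.
move=> /andP[i1 i2] /andP[j1 j2].
by case: (ltngtP i j) ij => [/le_arc|/le_arc|/val_inj ->]; rewrite ?eqxx //; lra.
Qed.

Let cover_arc : \big[setU/set0]_(i < n) arc i = setT.
Proof.
rewrite -bigcup_mkord; apply/seteqP; split => // w _.
have /andP[U0 U1] := U_itv w.
have /andP[k1 k2] := truncn_itv (mulr_ge0 U0 (ltW n_gt0R)).
exists (Num.truncn (U w * n%:R)).
  by rewrite /= -(ltr_nat R) (le_lt_trans k1) // -[ltRHS]mul1r ltr_pM2r.
by rewrite /arc /= !ler_pdivrMr ?ltr_pdivlMr // k1.
Qed.

Lemma prob_equal_arcs_uniform :
  (forall k, (k < n)%N -> P (arc k) = P (arc 0)) -> P (arc 0) = (n%:R^-1)%:E.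
Proof.
move=> arc_eq.
have sum1 : (\sum_(i < n) P (arc i))%E = 1%E.
  by rewrite -measure_bigsetU_ord // cover_arc; exact: probability_setT.
have : (P (arc 0) *+ n)%E = 1%E.
  rewrite -sum1 (eq_bigr (fun=> P (arc 0))) => [|i _]; last exact: arc_eq.
  by rewrite sumr_const card_ord.
have : P (arc 0) \is a fin_num.
  by rewrite ge0_fin_numE // (le_lt_trans (probability_le1 _ _)) ?ltry.
move=> /fineK <- /eqP; rewrite -EFin_natmul eqe => /eqP p1.
have {}p1 : fine (P (arc 0)) * n%:R = 1 by rewrite mulr_natr.
by congr EFin; apply: (mulIf (lt0r_neq0 n_gt0R)); rewrite p1 mulVf ?gt_eqF.
Qed.

End equal_arcs.

Lemma right_cvg_lt {R : realType} (f : R -> R) (t c : R) :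
  f x @[x --> t^'+] --> f t -> f t < c ->
  exists2 e, 0 < e & forall x, t <= x < t + e -> f x < c.
Proof.
move=> ft ftc; have [e /= e0 fe] := proj1 (nbhs_ballP _ _) (cvgr_lt _ ft _ ftc).
exists e => // x /andP[tx xte]; have [-> //|xt] := eqVneq x t.
have tltx : t < x by rewrite lt_neqAle eq_sym xt.
by apply: fe tltx; rewrite /ball /= ltr_norml; apply/andP; split; lra.
Qed.

Lemma shift0 {R : realType} (g : R -> R) : Defs.shift 0 g = g.
Proof. by apply/funext => x; rewrite /Defs.shift addr0. Qed.

Section location_of_shifts.
Variables (R : realType) (H : set (R -> R)) (L : (R -> R) -> R -> R -> option R)
  (d : measure_display) (Omega : measurableType d) (P : probability Omega R)
  (X : Omega -> R -> R).
Hypotheses (Hsh : period1_shift_invariant H)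
  (HL : invariant_intrinsic_location_functional H L)
  (HX : periodic_stationary_process H P X).

(* [loc c w] is L(theta_c X, [0,1]); the default [0] is never used, since an
   invariant [L] never returns infinity. *)
Definition loc (c : R) (w : Omega) : R := odflt 0 (L (Defs.shift c (X w)) 0 1).

Let H_X w : H (X w). Proof. by case: HX => _ []. Qed.

Let H_shiftX c w : H (Defs.shift c (X w)).
Proof. by case: Hsh => _; apply. Qed.

Lemma L_shiftX c w : L (Defs.shift c (X w)) 0 1 = Some (loc c w).
Proof.
rewrite /loc; case: HL => _ [finL _].
by case: L (finL _ 0 1 (H_shiftX c w) ltr01).
Qed.

Lemma L_X w : L (X w) 0 1 = Some (loc 0 w).
Proof. by rewrite -L_shiftX shift0. Qed.

Lemma loc0_itv w : 0 <= loc 0 w <= 1.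
Proof.
case: HL => [[_ [inI _]] _].
exact: (inI (X w) 0 1 (H_X w) ltr01 _ (L_X w)).
Qed.

Lemma fract_loc c w : fract (loc c w) = fract (loc 0 w - c).
Proof.
case: HL => [[_ [_ [shiftL _]]] [_ invL]].
have [x [y [k [Lx [Ly xyk]]]]] := invL (X w) c (H_X w).
have := shiftL (X w) c (c + 1) c (H_X w).
rewrite ltrDl ltr01 addrAC !subrr add0r Ly L_shiftX /= => /(_ isT) [yE].
move: Lx; rewrite L_X => -[xE].
have -> : loc 0 w - c = loc c w + k%:~R by rewrite -xyk xE yE; lra.
by rewrite fractDz.
Qed.

Lemma law_loc_shift c B : measurable B ->
  measurable (loc 0 @^-1` B) /\ P (loc 0 @^-1` B) = P (loc c @^-1` B).
Proof.
move=> mB; case: HL => [[measL _] _].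
have := @cylinder_sigma_shift_preserved _ _ _ _ _ _ HX Hsh c _ (measL 0 1 ltr01 B mB).
have E c' : [set w | [set g | H g /\ exists x, L g 0 1 = Some x /\ B x]
                       (Defs.shift c' (X w))] = loc c' @^-1` B.
  apply/seteqP; split => w /=; rewrite L_shiftX; first by case=> _ [x [[<-]]].
  by move=> Bw; split; last by exists (loc c' w).
by under eq_set => w do rewrite -(shift0 (X w)); rewrite !E.
Qed.

Lemma measurable_loc0 : measurable_fun setT (loc 0).
Proof. by move=> _ B mB; rewrite setTI; exact: (law_loc_shift 0 B mB).1. Qed.

(* The position of [L(X, [0,1])] on the circle [R/Z], measured from [t]. *)
Definition phase (t : R) (w : Omega) : R := fract (loc 0 w - t).

Lemma phase_itv t w : 0 <= phase t w < 1.
Proof. exact: fract_itv. Qed.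

Lemma measurable_phase t : measurable_fun setT (phase t).
Proof.
apply: measurableT_comp; first exact: measurable_fract.
by apply: measurable_funB; [exact: measurable_loc0 | exact: measurable_cst].
Qed.

(* Stationarity makes the law of the phase invariant under rotations. *)
Lemma prob_phase_rotate t c a : 0 <= c -> 0 < a -> c + a <= 1 ->
  P [set w | c <= phase t w < c + a] = P [set w | 0 <= phase t w < a].
Proof.
move=> c0 a0 ca; pose S := [set z : R | fract (z - t) < a].
have mS : measurable S.
  have mft : measurable_fun setT (fun z : R => fract (z - t)).
    apply: measurableT_comp; first exact: measurable_fract.
    by apply: measurable_funB => //; exact: measurable_cst.
  have := mft measurableT _ (measurable_itv `]-oo, a[).
  by rewrite setTI; congr measurable; apply/seteqP; split => z; rewrite /= in_itv.
have phaseE w : fract (phase t w - c) = fract (loc c w - t).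
  by rewrite /phase fractDl -(fractDl (loc c w)) fract_loc fractDl addrAC.
have rotE : [set w | c <= phase t w < c + a] = loc c @^-1` S.
  by apply/seteqP; split => w; rewrite /= -fract_subr_lt ?phase_itv // phaseE.
have E0 : [set w | 0 <= phase t w < a] = loc 0 @^-1` S.
  by apply/seteqP; split => w; rewrite /= (proj1 (andP (phase_itv t w))).
by rewrite rotE E0 (law_loc_shift c S mS).2.
Qed.

Lemma prob_phase_first_arc t n : (0 < n)%N ->
  P [set w | 0 <= phase t w < n%:R^-1] = (n%:R^-1)%:E.
Proof.
move=> n0; have := @prob_equal_arcs_uniform R d Omega P (phase t) n n0
  (measurable_phase t) (phase_itv t).
rewrite mul0r div1r; apply => k kn.
have nR : 0 < n%:R :> R by rewrite ltr0n.
rewrite -natr1 mulrDl div1r prob_phase_rotate //.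
- by rewrite invr_gt0.
- have -> : k%:R / n%:R + n%:R^-1 = k.+1%:R / n%:R :> R by rewrite -natr1 mulrDl mul1r.
  by rewrite ler_pdivrMr // mul1r ler_nat.
Qed.

Lemma measurable_L_X T B : 0 < T -> measurable B ->
  measurable [set w | exists x, L (X w) 0 T = Some x /\ B x].
Proof.
move=> T0 mB; case: HL => [[measL _] _].
have [+ _] := @cylinder_sigma_shift_preserved _ _ _ _ _ _ HX Hsh 0 _ (measL 0 T T0 B mB).
by congr measurable; apply/seteqP; split => w /=; [case | split].
Qed.

Lemma prob_phase_arc_le t T a : 0 < t -> 0 < a -> t + a <= T -> T <= 1 ->
  (P [set w | (0 <= phase t w < a)%R] <=
   P [set w | exists x, L (X w) 0 T = Some x /\ `[t, (t + a)%R[%classic x])%E.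
Proof.
move=> t0 a0 taT T1; apply: le_measure; rewrite ?inE.
- have := measurable_phase t measurableT _ (measurable_itv `[0, a[).
  by rewrite setTI; congr measurable; apply/seteqP; split => w; rewrite /= in_itv.
- by apply: measurable_L_X; [lra | exact: measurable_itv].
move=> w /andP[_ pa]; have /andP[y0 y1] := loc0_itv w.
have ty : t <= loc 0 w < t + a.
  move: y1; rewrite le_eqVlt => /orP[/eqP y1 | y1].
    by move: pa; rewrite /phase y1 fract_id; [lra | apply/andP; split; lra].
  by rewrite -fract_subr_lt ?y0 ?y1 //; lra.
case: HL => [[_ [_ [_ [restrL _]]]] _]; exists (loc 0 w); split.
  by apply: (restrL _ 0 1 0 T (H_X w) ltr01) (L_X w) _ => //; lra.
by rewrite /= in_itv.
Qed.

End location_of_shifts.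

Arguments prob_phase_first_arc {R H L d Omega P X}.
Arguments prob_phase_arc_le {R H L d Omega P X}.

Theorem mainTheorem6 (R : realType) (H : set (R -> R))
  (L : (R -> R) -> R -> R -> option R)
  (d : measure_display) (Omega : measurableType d)
  (P : probability Omega R) (X : Omega -> R -> R) (T : R) (f : R -> R) :
  period1_shift_invariant H ->
  invariant_intrinsic_location_functional H L ->
  periodic_stationary_process H P X ->
  0 < T -> T <= 1 ->
  is_density_on P (fun w => L (X w) 0 T) T f ->
  cadlag_on 0 T f ->
  forall t, 0 < t < T -> 1 <= f t.
Proof.
move=> Hsh HL HX T0 T1 dens cadlag t tI; have /andP[t0 tT] := tI.
rewrite leNgt; apply/negP => ft1.
have [M [ftM M0 M1]] : exists M, [/\ f t < M, 0 <= M & M < 1].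
  have [ft0|ft0] := ltP (f t) 0; first by exists 0; split.
  by exists ((1 + f t) / 2); split; lra.
have [e e0 fM] := right_cvg_lt _ _ _ (cadlag t tI).1 ftM.
have := @ltr_add_invr R 0 (Num.min e (T - t)); rewrite lt_min e0 subr_gt0 tT.
case=> // k; rewrite add0r lt_min => /andP[]; set a := (k.+1%:R^-1 : R) => ae aT.
have a0 : 0 < a by rewrite invr_gt0.
have : (a%:E <= (M * a)%:E)%E.
  rewrite -[X in (X <= _)%E](prob_phase_first_arc Hsh HL HX t k.+1 isT).
  apply: le_trans (prob_phase_arc_le Hsh HL HX t T a t0 a0 _ T1) _; first lra.
  rewrite dens //; last by move=> x /=; rewrite !in_itv /= => /andP[? ?]; lra.
  by apply: integral_itv_le => // x ?; apply/ltW/fM; lra.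
by rewrite lee_fin; nra.
Qed.
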